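(* Let $M\in\mathbb{R}^{d\times d}$ satisfy $\|M\|\le1$. Then for every $u\in\mathbb{C}^d$ with $\|u\|\le1$ and every integer $n\ge1$, $$\|M^nu\|^2-\|M^{n+1}u\|^2\le\frac{\operatorname{rank}(M)}{n}\le\frac dn.$$
   Context: $\|\cdot\|$ denotes the Euclidean norm for vectors and the spectral norm for matrices. *)

(* Real scalars: an arbitrary real closed field R (e.g. the reals);
   complex scalars: complex R = R[i] from mathcomp-real-closed. *)
From HB Require Import structures.
From mathcomp Require Import all_boot all_order all_algebra.
From mathcomp Require Import complex.
Set Implicit Arguments. Unset Strict Implicit. Unset Printing Implicit Defensive.
Import Order.TTheory GRing.Theory Num.Theory.
Local Open Scope ring_scope.

Definition rvnorm (R : rcfType) (d : nat) (x : 'cV[R]_d) : R :=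
  Num.sqrt (\sum_(i < d) x i 0 ^+ 2).

Definition cvnorm (R : rcfType) (d : nat) (u : 'cV[complex R]_d) : R :=
  Num.sqrt (\sum_(i < d) (complex.Re (u i 0) ^+ 2 + complex.Im (u i 0) ^+ 2)).

(* ||M|| <= 1 for the spectral (Euclidean operator) norm of a real matrix:
   ||M x|| <= ||x|| for all x. *)
Definition spec_norm_le1 (R : rcfType) (d : nat) (M : 'M[R]_d) : Prop :=
  forall x : 'cV[R]_d, rvnorm (M *m x) <= rvnorm x.

Definition cplx_mx (R : rcfType) (d : nat) (M : 'M[R]_d) : 'M[complex R]_d :=
  map_mx (fun r : R => r%:C%C) M.

(* Let F_j = tr ((M^j)^T M^j) be the squared Frobenius norm of M^j.  The matrix
   (M^j)^T (1 - M^T M) M^j is positive semidefinite with trace F_j - F_(j+1), and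
   |M^n x|^2 - |M^(n+1) x|^2 is its quadratic form at M^(n-j) x for every j <= n.  As a
   positive semidefinite form is bounded by |v|^2 times its trace, the drop at step n is
   at most F_j - F_(j+1) for each 1 <= j <= n; summing, n times the drop is at most
   F_1 = tr (M M^T), which is at most rank M because M^T is a contraction as well.
   A complex vector is handled through its real and imaginary parts. *)

From HB Require Import structures.
From mathcomp Require Import all_boot all_order all_algebra.
From mathcomp Require Import complex ring lra.
Import Order.TTheory GRing.Theory Num.Theory.
Set Implicit Arguments. Unset Strict Implicit. Unset Printing Implicit Defensive.
Local Open Scope ring_scope.

Lemma quadratic_ge0_discr (R : realDomainType) (p q r : R) :
  (forall x y, 0 <= x ^+ 2 * p + 2 * x * y * q + y ^+ 2 * r) -> q ^+ 2 <= p * r.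
Proof.
move=> h.
have p_ge0 : 0 <= p by have := h 1 0; rewrite expr1n expr0n /= mulr0 !mul0r !addr0 mul1r.
have r_ge0 : 0 <= r by have := h 0 1; rewrite expr1n expr0n /= !mulr0 !mul0r !add0r mul1r.
have hr : 0 <= r * (p * r - q ^+ 2) by have := h r (- q); congr (0 <= _); ring.
have hp : 0 <= p * (p * r - q ^+ 2) by have := h (- q) p; congr (0 <= _); ring.
have [pr0|pr_neq0] := eqVneq (p + r) 0.
  have [-> ->] : p = 0 /\ r = 0 by split; lra.
  have := h 1 1; have := h 1 (-1) => h1 h2; have -> : q = 0 by lra.
  by rewrite expr0n mulr0.
have pr_gt0 : 0 < p + r by rewrite lt_neqAle eq_sym pr_neq0 addr_ge0.
by rewrite -subr_ge0 -(pmulr_rge0 _ pr_gt0) mulrDl addr_ge0.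
Qed.

Lemma mulrn_le_telescope (R : numDomainType) (a : nat -> R) (D : R) n :
  (forall j, (1 <= j <= n)%N -> D <= a j - a j.+1) -> D *+ n <= a 1%N - a n.+1.
Proof.
elim: n => [|n IH] hD; first by rewrite mulr0n subrr.
have -> : a 1%N - a n.+2 = (a 1%N - a n.+1) + (a n.+1 - a n.+2) by rewrite addrA subrK.
rewrite mulrSr lerD ?hD ?leqnn // IH // => j /andP[j1 jn].
by rewrite hD // j1 ltnW.
Qed.

Section QuadraticForms.
Variable R : realFieldType.

Definition sqnorm d (v : 'cV[R]_d) : R := \sum_(i < d) v i 0 ^+ 2.

Definition bform d (A : 'M[R]_d) (a b : 'cV[R]_d) : R := (a^T *m A *m b) 0 0.

Variable d : nat.
Implicit Types (A B : 'M[R]_d) (a b v w : 'cV[R]_d).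

Lemma sqnorm_ge0 v : 0 <= sqnorm v.
Proof. by apply: sumr_ge0 => i _; apply: sqr_ge0. Qed.

Lemma sqnorm_eq0 v : sqnorm v = 0 -> v = 0.
Proof.
move=> /eqP; rewrite psumr_eq0 => [/allP v0|i _]; last exact: sqr_ge0.
apply/matrixP => i j; rewrite ord1 mxE.
by have /implyP/(_ isT) := v0 i (mem_index_enum _); rewrite sqrf_eq0 => /eqP.
Qed.

Lemma bform1 v : bform 1%:M v v = sqnorm v.
Proof. by rewrite /bform mulmx1 mxE; apply: eq_bigr => i _; rewrite mxE expr2. Qed.

Lemma bformC A a b : A^T = A -> bform A b a = bform A a b.
Proof.
move=> sA; rewrite /bform.
have -> : b^T *m A *m a = (a^T *m A *m b)^T by rewrite !trmx_mul trmxK sA mulmxA.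
by rewrite mxE.
Qed.

Lemma bformBl A B a b : bform (A - B) a b = bform A a b - bform B a b.
Proof. by rewrite /bform mulmxBr mulmxBl !mxE. Qed.

Lemma bform_conj m (N : 'M[R]_(d, m)) A (a b : 'cV[R]_m) :
  bform (N^T *m A *m N) a b = bform A (N *m a) (N *m b).
Proof. by rewrite /bform trmx_mul !mulmxA. Qed.

Lemma bform_delta A i v : bform A (delta_mx i 0) v = (A *m v) i 0.
Proof. by rewrite /bform trmx_delta -rowE -row_mul mxE. Qed.

Lemma bform_delta_diag A i : bform A (delta_mx i 0) (delta_mx i 0) = A i i.
Proof. by rewrite bform_delta -colE mxE. Qed.

Lemma mxtrace_conj (N : 'M[R]_d) A :
  \tr (N^T *m A *m N) = \sum_i bform A (col i N) (col i N).
Proof. by apply: eq_bigr => i _; rewrite colE -bform_conj bform_delta_diag. Qed.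

Lemma bformDl A a b w : bform A (a + b) w = bform A a w + bform A b w.
Proof. by rewrite /bform linearD /= !mulmxDl [LHS]mxE. Qed.

Lemma bformZl A x a w : bform A (x *: a) w = x * bform A a w.
Proof. by rewrite /bform linearZ /= -!scalemxAl [LHS]mxE. Qed.

Lemma bformDr A a b w : bform A w (a + b) = bform A w a + bform A w b.
Proof. by rewrite /bform mulmxDr [LHS]mxE. Qed.

Lemma bformZr A x a w : bform A w (x *: a) = x * bform A w a.
Proof. by rewrite /bform -scalemxAr [LHS]mxE. Qed.

Lemma bformDZ A a b x y : A^T = A ->
  bform A (x *: a + y *: b) (x *: a + y *: b) =
  x ^+ 2 * bform A a a + 2 * x * y * bform A a b + y ^+ 2 * bform A b b.
Proof.
move=> sA; rewrite !(bformDl, bformDr, bformZl, bformZr) (bformC b a sA); ring.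
Qed.

Section PositiveSemidefinite.
Variable A : 'M[R]_d.
Hypotheses (A_sym : A^T = A) (A_psd : forall v, 0 <= bform A v v).

Lemma psd_cauchy_schwarz a b : bform A a b ^+ 2 <= bform A a a * bform A b b.
Proof. by apply: quadratic_ge0_discr => x y; rewrite -bformDZ. Qed.

Lemma psd_mxtrace_ge0 : 0 <= \tr A.
Proof. by apply: sumr_ge0 => i _; rewrite -bform_delta_diag. Qed.

End PositiveSemidefinite.

Lemma sqnorm_cauchy_schwarz a b : bform 1%:M a b ^+ 2 <= sqnorm a * sqnorm b.
Proof.
rewrite -!bform1; apply: psd_cauchy_schwarz; first exact: trmx1.
by move=> v; rewrite bform1 sqnorm_ge0.
Qed.

Lemma psd_bform_le_trace A : A^T = A -> (forall v, 0 <= bform A v v) ->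
  forall v, bform A v v <= sqnorm v * \tr A.
Proof.
move=> sA pA v.
(* |A v|^2 <= <v, A v> tr A by Cauchy-Schwarz for the form of A, and
   <v, A v>^2 <= |v|^2 |A v|^2 *)
have Av2 : sqnorm (A *m v) <= bform A v v * \tr A.
  rewrite /sqnorm /mxtrace mulr_sumr; apply: ler_sum => i _.
  by rewrite -bform_delta -bform_delta_diag mulrC psd_cauchy_schwarz.
have cs := sqnorm_cauchy_schwarz v (A *m v).
rewrite [bform _ _ _]/bform mulmx1 mulmxA -/(bform A v v) in cs.
have [->|s_neq0] := eqVneq (bform A v v) 0.
  by rewrite mulr_ge0 ?sqnorm_ge0 ?psd_mxtrace_ge0.
have s_gt0 : 0 < bform A v v by rewrite lt_neqAle eq_sym s_neq0 pA.
rewrite -(ler_pM2l s_gt0) -expr2 (le_trans cs) // mulrCA.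
by rewrite ler_wpM2l ?sqnorm_ge0.
Qed.

End QuadraticForms.

Lemma unitmx_gram (R : realFieldType) m n (B : 'M[R]_(m, n)) :
  row_free B^T -> B^T *m B \in unitmx.
Proof.
move=> freeBT; rewrite -row_free_unit -kermx_eq0; apply/eqP/row_matrixP => i.
set v := row i (kermx (B^T *m B)); rewrite row0.
have vG : v *m (B^T *m B) = 0 by apply/sub_kermxP; rewrite row_sub.
have Bv : B *m v^T = 0.
  apply: sqnorm_eq0; rewrite -bform1 -bform_conj /bform trmxK mulmx1.
  by rewrite vG mul0mx mxE.
apply: (row_free_inj freeBT).
by rewrite mul0mx -[v *m B^T]trmxK trmx_mul trmxK Bv trmx0.
Qed.

(* [P = B (B^T B)^-1 B^T] for a basis [B] of the column space of [N] *)
Lemma col_space_orthoprojector (R : realFieldType) d (N : 'M[R]_d) :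
  exists P : 'M[R]_d,
    [/\ P^T = P, P *m P = P, P *m N = N & \tr P = (\rank N)%:R].
Proof.
set B := col_base N; set G := B^T *m B.
have uG : G \in unitmx.
  by apply: unitmx_gram; rewrite /row_free mxrank_tr; exact: col_base_full.
have GT : G^T = G by rewrite /G trmx_mul trmxK.
have N_def : B *m row_base N = N := mulmx_base N.
have PB : B *m invmx G *m B^T *m B = B by rewrite -!mulmxA mulVmx // mulmx1.
clearbody B.
exists (B *m invmx G *m B^T); split.
- by rewrite !trmx_mul trmxK trmx_inv GT mulmxA.
- by rewrite !mulmxA PB.
- by rewrite -[X in _ *m X = _]N_def mulmxA PB.
- by rewrite mxtrace_mulC mulmxA mulmxV // mxtrace1.
Qed.

Definition mxsqfrob (R : pzRingType) m n (N : 'M[R]_(m, n)) : R := \tr (N^T *m N).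

Lemma mxsqfrob_ge0 (R : realFieldType) d (N : 'M[R]_d) : 0 <= mxsqfrob N.
Proof.
rewrite /mxsqfrob; have -> : N^T *m N = N^T *m 1%:M *m N by rewrite mulmx1.
by rewrite mxtrace_conj sumr_ge0 // => i _; rewrite bform1 sqnorm_ge0.
Qed.

Section Contraction.
Variables (R : realFieldType) (d : nat) (M : 'M[R]_d).
Hypothesis M_contr : forall x, sqnorm (M *m x) <= sqnorm x.

Lemma contraction_trmx x : sqnorm (M^T *m x) <= sqnorm x.
Proof.
set y := M^T *m x.
have y2 : sqnorm y = bform 1%:M x (M *m y).
  by rewrite -bform1 /bform !mulmx1 /y trmx_mul trmxK !mulmxA.
have cs := sqnorm_cauchy_schwarz x (M *m y); rewrite -y2 in cs.
have [->|y_neq0] := eqVneq (sqnorm y) 0; first exact: sqnorm_ge0.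
have y_gt0 : 0 < sqnorm y by rewrite lt_neqAle eq_sym y_neq0 sqnorm_ge0.
rewrite -(ler_pM2l y_gt0) -expr2 (le_trans cs) // mulrC.
by rewrite ler_wpM2r ?sqnorm_ge0.
Qed.

Lemma contractionX k x : sqnorm (M ^+ k *m x) <= sqnorm x.
Proof.
elim: k x => [|k IH] x; first by rewrite expr0 mul1mx.
by rewrite exprS -mulmxE -mulmxA (le_trans (M_contr _)).
Qed.

(* [tr (M M^T) = tr (P M M^T P) = sum_i |M^T P e_i|^2 <= sum_i |P e_i|^2 = tr P]
   for the orthogonal projector [P] onto the column space of [M] *)
Lemma mxsqfrob_le_rank : mxsqfrob M <= (\rank M)%:R.
Proof.
have [P [PT PP PM trP]] := col_space_orthoprojector M.
have MMT : M *m M^T = P^T *m (M *m M^T) *m P.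
  by rewrite PT -{1}PM -{2}PM trmx_mul PT !mulmxA.
have rkM : (\rank M)%:R = \sum_i bform 1%:M (col i P) (col i P).
  by rewrite -mxtrace_conj mulmx1 PT PP trP.
rewrite /mxsqfrob mxtrace_mulC MMT mxtrace_conj rkM; apply: ler_sum => i _.
have -> : M *m M^T = M^T^T *m 1%:M *m M^T by rewrite mulmx1 trmxK.
by rewrite bform_conj !bform1 contraction_trmx.
Qed.

Definition contraction_defect j := (M ^+ j)^T *m (1%:M - M^T *m M) *m M ^+ j.

Lemma contraction_defect_sym j : (contraction_defect j)^T = contraction_defect j.
Proof.
by rewrite !trmx_mul trmxK linearB /= trmx1 trmx_mul trmxK mulmxA.
Qed.

Lemma bform_contraction_defect j v :
  bform (contraction_defect j) v v = sqnorm (M ^+ j *m v) - sqnorm (M ^+ j.+1 *m v).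
Proof.
rewrite /contraction_defect bform_conj bformBl bform1 exprS -mulmxE -mulmxA.
have -> : M^T *m M = M^T *m 1%:M *m M by rewrite mulmx1.
by rewrite bform_conj bform1.
Qed.

Lemma contraction_defect_psd j v : 0 <= bform (contraction_defect j) v v.
Proof. by rewrite bform_contraction_defect subr_ge0 exprS -mulmxE -mulmxA. Qed.

Lemma mxtrace_contraction_defect j :
  \tr (contraction_defect j) = mxsqfrob (M ^+ j) - mxsqfrob (M ^+ j.+1).
Proof.
rewrite /contraction_defect /mxsqfrob exprS -mulmxE mulmxBr mulmxBl mulmx1 raddfB /=.
by rewrite trmx_mul !mulmxA.
Qed.

Lemma mxsqfrob_drop_ge0 j : 0 <= mxsqfrob (M ^+ j) - mxsqfrob (M ^+ j.+1).
Proof.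
rewrite -mxtrace_contraction_defect.
exact: psd_mxtrace_ge0 (contraction_defect_psd j).
Qed.

Lemma sqnorm_drop_le j k x :
  sqnorm (M ^+ (j + k) *m x) - sqnorm (M ^+ (j + k).+1 *m x)
    <= sqnorm x * (mxsqfrob (M ^+ j) - mxsqfrob (M ^+ j.+1)).
Proof.
rewrite -addSn !exprD -!mulmxE -!mulmxA -bform_contraction_defect.
rewrite -mxtrace_contraction_defect.
apply: le_trans (psd_bform_le_trace (contraction_defect_sym j) (@contraction_defect_psd j) _) _.
by rewrite ler_wpM2r ?contractionX // mxtrace_contraction_defect mxsqfrob_drop_ge0.
Qed.

Lemma sqnorm2_drop_le_rank x y n : (0 < n)%N -> sqnorm x + sqnorm y <= 1 ->
  (sqnorm (M ^+ n *m x) + sqnorm (M ^+ n *m y))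
    - (sqnorm (M ^+ n.+1 *m x) + sqnorm (M ^+ n.+1 *m y)) <= (\rank M)%:R / n%:R.
Proof.
move=> n_gt0 xy_le1; set D := _ - _.
have D_le j : (1 <= j <= n)%N -> D <= mxsqfrob (M ^+ j) - mxsqfrob (M ^+ j.+1).
  case/andP=> _ jn; have := sqnorm_drop_le j (n - j).
  rewrite subnKC // => drop_le; have := drop_le x; have := drop_le y.
  have := mxsqfrob_drop_ge0 j; rewrite /D; nra.
have := mulrn_le_telescope D_le; rewrite expr1.
have := mxsqfrob_le_rank; have := mxsqfrob_ge0 (M ^+ n.+1).
rewrite ler_pdivlMr ?ltr0n // mulr_natr; lra.
Qed.

End Contraction.

Section ComplexVectors.
Variable R : rcfType.

Lemma spec_norm_le1_sqnorm d (M : 'M[R]_d) :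
  spec_norm_le1 M -> forall x, sqnorm (M *m x) <= sqnorm x.
Proof. by move=> hM x; have := hM x; rewrite /rvnorm ler_sqrt ?sqnorm_ge0. Qed.

Lemma cvnorm_sqr d (u : 'cV[complex R]_d) :
  cvnorm u ^+ 2 = sqnorm (map_mx (@complex.Re R) u) + sqnorm (map_mx (@complex.Im R) u).
Proof.
rewrite /cvnorm sqr_sqrtr; last by rewrite sumr_ge0 // => i _; rewrite addr_ge0 ?sqr_ge0.
by rewrite /sqnorm -big_split; apply: eq_bigr => i _; rewrite !mxE.
Qed.

Lemma cplx_mxX d (M : 'M[R]_d) k : cplx_mx M ^+ k = cplx_mx (M ^+ k).
Proof.
elim: k => [|k IH]; first by rewrite !expr0 /cplx_mx map_mx1.
by rewrite !exprS IH -!mulmxE /cplx_mx map_mxM.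
Qed.

Lemma real_complex_mulE (r : R) (z : complex R) : r%:C%C * z = r *: (z : Rcomplex R).
Proof. by case: z => a b; apply/eqP; rewrite eq_complex /= !mul0r subr0 addr0 !eqxx. Qed.

Lemma map_cplx_mx_mul d (f : {scalar Rcomplex R}) (M : 'M[R]_d) (u : 'cV[complex R]_d) :
  map_mx f (cplx_mx M *m u) = M *m map_mx f u.
Proof.
apply/matrixP => i j; rewrite !mxE raddf_sum.
apply: eq_bigr => k _; rewrite !mxE real_complex_mulE; exact: scalarZ.
Qed.

End ComplexVectors.

Unset Implicit Arguments.
Theorem mainTheorem15 (R : rcfType) (d : nat) (M : 'M[R]_d)
  (hM : spec_norm_le1 M) (u : 'cV[complex R]_d) (hu : cvnorm u <= 1)
  (n : nat) (hn : (1 <= n)%N) :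
  cvnorm ((cplx_mx M ^+ n) *m u) ^+ 2 - cvnorm ((cplx_mx M ^+ n.+1) *m u) ^+ 2
    <= (\rank M)%:R / n%:R
  /\ (\rank M)%:R / n%:R <= d%:R / n%:R :> R.
Proof.
split; last by rewrite ler_pM2r ?invr_gt0 ?ltr0n // ler_nat rank_leq_col.
rewrite !cplx_mxX !cvnorm_sqr !map_cplx_mx_mul.
apply: sqnorm2_drop_le_rank => //; first exact: spec_norm_le1_sqnorm.
by rewrite -cvnorm_sqr exprn_ile1 ?sqrtr_ge0.
Qed.
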